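(* Let $\Theta$ be a finite set of rules $(\Delta,\psi)$ (with $\Delta$ a finite set of formulas and $\psi$ a formula). For every set of formulas $\Gamma$ and formula $\varphi$: $\Gamma\vdash_{\mathsf{NeL}+\Theta}\varphi$ iff $\Gamma\models_{\mathfrak{N}_w^{\Theta}}\varphi$.
   Context: Formulas are built from a countably infinite set of variables using binary $\otimes,\circ$ and unary ${}^{*}$; $\mathbf{Fm}$ is the formula algebra. Abbreviations (also term operations in algebras): $\varphi\Rightarrow\psi:=(\varphi\circ\psi^{*})^{*}$; $\varphi\Leftrightarrow\psi:=(\varphi\Rightarrow\psi)\otimes(\psi\Rightarrow\varphi)$; $\varphi\not\Leftrightarrow\psi:=(\varphi\Leftrightarrow\psi)^{*}$; $\varphi\not\Leftrightarrow\psi\not\Leftrightarrow\chi:=((\varphi\not\Leftrightarrow\psi)\otimes(\varphi\not\Leftrightarrow\chi))\otimes(\psi\not\Leftrightarrow\chi)$. $\mathsf{NeL}$: axiom schemes (A1) $\varphi\Rightarrow\varphi$; (A2) $(\varphi\circ\psi)\Rightarrow(\psi\circ\varphi)$; (A3) $\varphi\Rightarrow\varphi^{**}$; (A4) $(\varphi\Rightarrow\psi)\Rightarrow(\varphi\circ\psi)$; (A5) $(\varphi\otimes\psi)\Leftrightarrow(\psi\otimes\varphi)$; (A6) $((\varphi\otimes\psi)\Rightarrow\chi)\Rightarrow((\varphi\otimes\chi^{*})\Rightarrow\psi^{*})$; (A7) $(\varphi\not\Leftrightarrow\psi\not\Leftrightarrow\chi)\Rightarrow((\varphi\Rightarrow\psi)\Rightarrow((\psi\Rightarrow\chi)\Rightarrow(\varphi\Rightarrow\chi)))$;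 rules $\varphi\Rightarrow\psi,\varphi/\psi$; $\varphi,\psi/\varphi\otimes\psi$; $\varphi\Leftrightarrow\psi,\chi/\chi'$ ($\chi'$ from $\chi$ replacing one or more occurrences of $\varphi$ by $\psi$); $\varphi\otimes\psi/\varphi$, applicable to arbitrary formulas. $\mathsf{NeL}+\Theta$ is the least substitution-invariant consequence relation extending $\vdash_{\mathsf{NeL}}$ in which every rule of $\Theta$ holds. A weak $\mathcal{N}$-algebra is an algebra $(A,\otimes,\circ,{}^{*})$ of type $(2,2,1)$ with $\otimes,\circ$ commutative, $x^{**}=x$, and $(x\otimes y)\circ z=(x\otimes z)\circ y$. With $\mathsf{t}\ne\mathsf{f}$ two symbols not in $A$ and $\overline A=A\cup\{\mathsf{t},\mathsf{f}\}$, an $\mathfrak{N}_w$-model is $(\mathbf A,\perp,\{\mathsf{t},\mathsf{f}\})$, $\mathbf A$ a weak $\mathcal{N}$-algebra, $\perp\subseteq\overline A\times\overline A$, such that for all $x,y,z\in A$: (a) $x\perp x^{*}$; (b) $x\perp y^{*}$ and $y\perp x^{*}$ imply $x=y$; (c) $x\perp y$ iff $x\circ y\perp\mathsf{t}$; (d) $x\perp\mathsf{t}$ iff $x^{*}\perp\mathsf{f}$; (e) $x\perp\mathsf{f}$ and $y\perp\mathsf{f}$ iff $x\otimes y\perp\mathsf{f}$; (f) $(x\circ y^{*})^{*}\perp(x\circ y)^{*}$; (g) $x\perp y$ and $x\perp\mathsf{f}$ imply $y\perp\mathsf{t}$; (h) $(x\not\Leftrightarrow y\not\Leftrightarrow z)\perp((x\Rightarrow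 y)\Rightarrow((y\Rightarrow z)\Rightarrow(x\Rightarrow z)))^{*}$. $F_\perp=\{a\in A:a\perp\mathsf{f}\}$. $\mathfrak{N}_w^{\Theta}$ is the class of $\mathfrak{N}_w$-models such that for every $(\Delta,\psi)\in\Theta$ and every homomorphism $h:\mathbf{Fm}\to\mathbf A$, if $h(\delta)\perp\mathsf{f}$ for all $\delta\in\Delta$ then $h(\psi)\perp\mathsf{f}$. For a class $K$ of $\mathfrak{N}_w$-models, $\Gamma\models_K\varphi$ iff there is a finite $\Gamma'\subseteq\Gamma$ such that for every model in $K$ and every homomorphism $h$, $h(\Gamma')\subseteq F_\perp$ implies $h(\varphi)\in F_\perp$. *)

From Stdlib Require Import List.
Import ListNotations.
Set Implicit Arguments.

Inductive Formula : Type :=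
| Var : nat -> Formula
| Ot  : Formula -> Formula -> Formula
| Ci  : Formula -> Formula -> Formula
| St  : Formula -> Formula.

Definition fimp (p q : Formula) : Formula := St (Ci p (St q)).
Definition fiff (p q : Formula) : Formula := Ot (fimp p q) (fimp q p).
Definition fniff (p q : Formula) : Formula := St (fiff p q).
Definition fniff3 (p q r : Formula) : Formula :=
  Ot (Ot (fniff p q) (fniff p r)) (fniff q r).

Fixpoint subst (s : nat -> Formula) (p : Formula) : Formula :=
  match p with
  | Var n => s n
  | Ot a b => Ot (subst s a) (subst s b)
  | Ci a b => Ci (subst s a) (subst s b)
  | St a => St (subst s a)
  end.

Inductive rep0 (p q : Formula) : Formula -> Formula -> Prop :=
| rep0_refl c : rep0 p q c c
| rep0_here : rep0 p q p q
| rep0_Ot a a' b b' : rep0 p q a a' -> rep0 p q b b' -> rep0 p q (Ot a b) (Ot a' b')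
| rep0_Ci a a' b b' : rep0 p q a a' -> rep0 p q b b' -> rep0 p q (Ci a b) (Ci a' b')
| rep0_St a a' : rep0 p q a a' -> rep0 p q (St a) (St a').

Inductive rep1 (p q : Formula) : Formula -> Formula -> Prop :=
| rep1_here : rep1 p q p q
| rep1_Ot_l a a' b b' : rep1 p q a a' -> rep0 p q b b' -> rep1 p q (Ot a b) (Ot a' b')
| rep1_Ot_r a a' b b' : rep0 p q a a' -> rep1 p q b b' -> rep1 p q (Ot a b) (Ot a' b')
| rep1_Ci_l a a' b b' : rep1 p q a a' -> rep0 p q b b' -> rep1 p q (Ci a b) (Ci a' b')
| rep1_Ci_r a a' b b' : rep0 p q a a' -> rep1 p q b b' -> rep1 p q (Ci a b) (Ci a' b')
| rep1_St a a' : rep1 p q a a' -> rep1 p q (St a) (St a').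

Inductive NeL_axiom : Formula -> Prop :=
| A1 p : NeL_axiom (fimp p p)
| A2 p q : NeL_axiom (fimp (Ci p q) (Ci q p))
| A3 p : NeL_axiom (fimp p (St (St p)))
| A4 p q : NeL_axiom (fimp (fimp p q) (Ci p q))
| A5 p q : NeL_axiom (fiff (Ot p q) (Ot q p))
| A6 p q r : NeL_axiom (fimp (fimp (Ot p q) r) (fimp (Ot p (St r)) (St q)))
| A7 p q r : NeL_axiom
    (fimp (fniff3 p q r) (fimp (fimp p q) (fimp (fimp q r) (fimp p r)))).

Inductive NeL_der (G : Formula -> Prop) : Formula -> Prop :=
| d_hyp p : G p -> NeL_der G p
| d_ax p : NeL_axiom p -> NeL_der G p
| d_mp p q : NeL_der G (fimp p q) -> NeL_der G p -> NeL_der G q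
| d_adj p q : NeL_der G p -> NeL_der G q -> NeL_der G (Ot p q)
| d_rep p q c c' : NeL_der G (fiff p q) -> NeL_der G c -> rep1 p q c c' -> NeL_der G c'
| d_simp p q : NeL_der G (Ot p q) -> NeL_der G p.

Definition CRel := (Formula -> Prop) -> Formula -> Prop.

Definition consequence_relation (C : CRel) : Prop :=
  (forall G p, G p -> C G p) /\
  (forall G G' p, (forall x, G x -> G' x) -> C G p -> C G' p) /\
  (forall G D p, (forall d, D d -> C G d) -> C D p -> C G p).

Definition subst_set (s : nat -> Formula) (G : Formula -> Prop) : Formula -> Prop :=
  fun x => exists g, G g /\ x = subst s g.

Definition substitution_invariant (C : CRel) : Prop :=
  forall s G p, C G p -> C (subst_set s G) (subst s p).

Definition Rule := (list Formula * Formula)%type.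

Definition rule_holds (C : CRel) (r : Rule) : Prop :=
  C (fun x => In x (fst r)) (snd r).

(* Gamma |-_{NeL+Theta} phi : least substitution-invariant consequence relation
   extending |-_NeL in which every rule of Theta holds *)
Definition NeL_Theta_der (Th : list Rule) (G : Formula -> Prop) (p : Formula) : Prop :=
  forall C : CRel,
    consequence_relation C -> substitution_invariant C ->
    (forall G' p', NeL_der G' p' -> C G' p') ->
    (forall r, In r Th -> rule_holds C r) ->
    C G p.

Record weakNalg (A : Type) := {
  aot : A -> A -> A;
  aci : A -> A -> A;
  ast : A -> A;
  aot_comm : forall x y, aot x y = aot y x;
  aci_comm : forall x y, aci x y = aci y x;
  ast_invol : forall x, ast (ast x) = x;
  aot_ci : forall x y z, aci (aot x y) z = aci (aot x z) y
}.

Section AlgOps.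
Variables (A : Type) (W : weakNalg A).
Definition aimp (x y : A) : A := ast W (aci W x (ast W y)).
Definition aiff (x y : A) : A := aot W (aimp x y) (aimp y x).
Definition aniff (x y : A) : A := ast W (aiff x y).
Definition aniff3 (x y z : A) : A := aot W (aot W (aniff x y) (aniff x z)) (aniff y z).
Fixpoint eval (v : nat -> A) (p : Formula) : A :=
  match p with
  | Var n => v n
  | Ot a b => aot W (eval v a) (eval v b)
  | Ci a b => aci W (eval v a) (eval v b)
  | St a => ast W (eval v a)
  end.
End AlgOps.

(* A-bar = A ∪ {t, f} with t, f fresh and distinct *)
Inductive ext (A : Type) : Type :=
| El : A -> ext A
| tt_ : ext A
| ff_ : ext A.
Arguments tt_ {A}.
Arguments ff_ {A}.

Record NwModel (A : Type) := {
  alg : weakNalg A;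
  perp : ext A -> ext A -> Prop;
  ax_a : forall x, perp (El x) (El (ast alg x));
  ax_b : forall x y, perp (El x) (El (ast alg y)) -> perp (El y) (El (ast alg x)) -> x = y;
  ax_c : forall x y, perp (El x) (El y) <-> perp (El (aci alg x y)) tt_;
  ax_d : forall x, perp (El x) tt_ <-> perp (El (ast alg x)) ff_;
  ax_e : forall x y, (perp (El x) ff_ /\ perp (El y) ff_) <-> perp (El (aot alg x y)) ff_;
  ax_f : forall x y, perp (El (ast alg (aci alg x (ast alg y)))) (El (ast alg (aci alg x y)));
  ax_g : forall x y, perp (El x) (El y) -> perp (El x) ff_ -> perp (El y) tt_;
  ax_h : forall x y z,
      perp (El (aniff3 alg x y z))
           (El (ast alg (aimp alg (aimp alg x y) (aimp alg (aimp alg y z) (aimp alg x z)))))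
}.

Definition Fperp (A : Type) (M : NwModel A) (a : A) : Prop := perp M (El a) ff_.

(* homomorphisms Fm -> A are exactly the evaluation maps eval v *)
Definition in_NwTheta (Th : list Rule) (A : Type) (M : NwModel A) : Prop :=
  forall r, In r Th -> forall v : nat -> A,
    (forall d, In d (fst r) -> Fperp M (eval (alg M) v d)) ->
    Fperp M (eval (alg M) v (snd r)).

Definition NwTheta_conseq (Th : list Rule) (G : Formula -> Prop) (p : Formula) : Prop :=
  exists G' : list Formula, (forall g, In g G' -> G g) /\
    forall (A : Type) (M : NwModel A), in_NwTheta Th M ->
      forall v : nat -> A,
        (forall g, In g G' -> Fperp M (eval (alg M) v g)) ->
        Fperp M (eval (alg M) v p).

(* Soundness: [NwTheta_conseq Th] is itself a substitution-invariant
   consequence relation (finiteness of the premise set makes cut work) that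
   validates the axioms and rules of NeL and the rules of [Th]; hence it
   contains the least one.

   Completeness: for any such relation [C], the set [D] of [C]-consequences of
   [Gamma] is deductively closed and closed under the rules of [Th].  The
   replacement rule makes provable equivalence [D (fiff a b)] a congruence,
   and A2, A3, A5, A6 make the quotient a weak N-algebra.  Declaring
   [[a] ⊥ [b]] iff [(a ∘ b)^*] is in [D], [[a] ⊥ t] iff [a^*] is in [D] and
   [[a] ⊥ f] iff [a] is in [D] turns it into an N_w^Th-model (A1, A4, A7 give
   conditions (a), (f), (h); modus ponens gives (g)), in which the valuation
   [n |-> [Var n]] sends every formula [p] to [[p]], so that [F_⊥] is exactly
   [D]. *)
From Stdlib Require Import List Setoid Morphisms.
From Stdlib Require Import FunctionalExtensionality PropExtensionality.
From Stdlib Require Import IndefiniteDescription ProofIrrelevance.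
Import ListNotations.

Lemma subst_Var p : subst Var p = p.
Proof. induction p; simpl; congruence. Qed.

Lemma rep1_rep0 {p q c c'} : rep1 p q c c' -> rep0 p q c c'.
Proof. induction 1; constructor; assumption. Qed.

Section WeakNAlgebra.
Context {A : Type} (W : weakNalg A).

Lemma eval_subst v s p : eval W v (subst s p) = eval W (fun n => eval W v (s n)) p.
Proof. induction p; simpl; congruence. Qed.

Lemma eval_rep0 v p q c c' :
  eval W v p = eval W v q -> rep0 p q c c' -> eval W v c = eval W v c'.
Proof. intros Hpq; induction 1; simpl; congruence. Qed.

End WeakNAlgebra.

Section NwModelFacts.
Context {A : Type} (M : NwModel A).
Local Notation W := (alg M).

Lemma Fperp_aimp x y : Fperp M (aimp W x y) <-> perp M (El x) (El (ast W y)).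
Proof. unfold Fperp, aimp. now rewrite <- ax_d, <- ax_c. Qed.

Lemma Fperp_aot x y : Fperp M (aot W x y) <-> Fperp M x /\ Fperp M y.
Proof. symmetry. apply ax_e. Qed.

Lemma Fperp_mp x y : Fperp M (aimp W x y) -> Fperp M x -> Fperp M y.
Proof.
  intros Hxy Hx. apply Fperp_aimp in Hxy.
  unfold Fperp. rewrite <- (ast_invol W y), <- ax_d.
  exact (ax_g M _ _ Hxy Hx).
Qed.

Lemma Fperp_aiff_eq x y : Fperp M (aiff W x y) -> x = y.
Proof.
  unfold aiff. rewrite Fperp_aot, !Fperp_aimp.
  intros [Hxy Hyx]. exact (ax_b M x y Hxy Hyx).
Qed.

Lemma Fperp_A6 x y z :
  Fperp M (aimp W (aimp W (aot W x y) z) (aimp W (aot W x (ast W z)) (ast W y))).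
Proof.
  apply Fperp_aimp. unfold aimp.
  rewrite (ast_invol W y), (aot_ci W x y). apply ax_a.
Qed.

Lemma NeL_axiom_valid v p : NeL_axiom p -> Fperp M (eval W v p).
Proof.
  destruct 1 as [p | p q | p | p q | p q | p q r | p q r].
  - apply Fperp_aimp, ax_a.
  - apply Fperp_aimp; simpl. rewrite (aci_comm W (eval W v q)). apply ax_a.
  - apply Fperp_aimp; simpl. rewrite ast_invol. apply ax_a.
  - apply Fperp_aimp, ax_f.
  - apply Fperp_aot; split; apply Fperp_aimp; simpl; rewrite aot_comm; apply ax_a.
  - apply Fperp_A6.
  - apply Fperp_aimp, ax_h.
Qed.

End NwModelFacts.

Section Soundness.
Variable Th : list Rule.

Definition entails (L : list Formula) (p : Formula) : Prop :=
  forall A (M : NwModel A), in_NwTheta Th M -> forall v,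
    (forall g, In g L -> Fperp M (eval (alg M) v g)) -> Fperp M (eval (alg M) v p).

Lemma entails_incl L L' p : incl L L' -> entails L p -> entails L' p.
Proof. intros HLL' Hp A M HM v Hv. apply Hp; auto. Qed.

Lemma NwTheta_conseq_all G L :
  (forall d, In d L -> NwTheta_conseq Th G d) ->
  exists K, (forall g, In g K -> G g) /\ forall d, In d L -> entails K d.
Proof.
  induction L as [|a L IH]; intros HL.
  - exists []. split; intros ? [].
  - destruct (HL a (in_eq a L)) as [K1 [HK1 Ha]].
    destruct IH as [K2 [HK2 HL2]]. { intros d Hd. apply HL, in_cons, Hd. }
    exists (K1 ++ K2). split.
    + intros g Hg. apply in_app_or in Hg as [Hg | Hg]; auto.
    + intros d [<- | Hd].
      * apply (entails_incl K1); [apply incl_appl, incl_refl | exact Ha].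
      * apply (entails_incl K2); [apply incl_appr, incl_refl | auto].
Qed.

Lemma NwTheta_conseq_cut G L p :
  (forall d, In d L -> NwTheta_conseq Th G d) -> entails L p -> NwTheta_conseq Th G p.
Proof.
  intros HL Hp. destruct (NwTheta_conseq_all G L HL) as [K [HK HKL]].
  exists K. split; [exact HK |].
  intros A M HM v Hv. apply Hp; [exact HM |].
  intros d Hd. exact (HKL d Hd A M HM v Hv).
Qed.

Lemma NwTheta_conseq_hyp (G : Formula -> Prop) p : G p -> NwTheta_conseq Th G p.
Proof.
  intros Hp. exists [p]. split.
  - intros g [<- | []]. exact Hp.
  - intros A M HM v Hv. apply Hv, in_eq.
Qed.

Lemma entails_axiom p : NeL_axiom p -> entails [] p.
Proof. intros Hp A M _ v _. now apply NeL_axiom_valid. Qed.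

Lemma entails_mp p q : entails [fimp p q; p] q.
Proof.
  intros A M _ v Hv.
  apply (Fperp_mp M (eval (alg M) v p)); [apply (Hv (fimp p q)) | apply Hv]; simpl; auto.
Qed.

Lemma entails_adj p q : entails [p; q] (Ot p q).
Proof. intros A M _ v Hv. apply Fperp_aot. split; apply Hv; simpl; auto. Qed.

Lemma entails_rep p q c c' : rep1 p q c c' -> entails [fiff p q; c] c'.
Proof.
  intros Hrep A M _ v Hv.
  assert (Hpq : eval (alg M) v p = eval (alg M) v q)
    by apply (Fperp_aiff_eq M), (Hv (fiff p q)), in_eq.
  rewrite <- (eval_rep0 (alg M) v p q c c' Hpq (rep1_rep0 Hrep)).
  apply Hv; simpl; auto.
Qed.

Lemma entails_simp p q : entails [Ot p q] p.
Proof. intros A M _ v Hv. apply (Fperp_aot M _ (eval (alg M) v q)), (Hv (Ot p q)), in_eq. Qed.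

Lemma NwTheta_conseq_of_NeL_der G p : NeL_der G p -> NwTheta_conseq Th G p.
Proof.
  induction 1 as [p Hp | p Hp | p q _ IHpq _ IHp | p q _ IHp _ IHq
                 | p q c c' _ IHpq _ IHc Hrep | p q _ IHpq].
  - now apply NwTheta_conseq_hyp.
  - apply NwTheta_conseq_cut with []; [intros d [] | now apply entails_axiom].
  - apply NwTheta_conseq_cut with [fimp p q; p];
      [intros d [<- | [<- | []]]; assumption | apply entails_mp].
  - apply NwTheta_conseq_cut with [p; q];
      [intros d [<- | [<- | []]]; assumption | apply entails_adj].
  - apply NwTheta_conseq_cut with [fiff p q; c];
      [intros d [<- | [<- | []]]; assumption | now apply entails_rep].
  - apply NwTheta_conseq_cut with [Ot p q];
      [intros d [<- | []]; assumption | apply entails_simp].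
Qed.

Lemma NwTheta_conseq_consequence_relation : consequence_relation (NwTheta_conseq Th).
Proof.
  split; [| split].
  - exact NwTheta_conseq_hyp.
  - intros G G' p HGG' [K [HK Hp]]. exists K.
    split; [intros g Hg; apply HGG', HK, Hg | exact Hp].
  - intros G D p HD [K [HK Hp]]. apply NwTheta_conseq_cut with K;
      [intros d Hd; apply HD, HK, Hd | exact Hp].
Qed.

Lemma NwTheta_conseq_substitution_invariant : substitution_invariant (NwTheta_conseq Th).
Proof.
  intros s G p [K [HK Hp]]. exists (map (subst s) K). split.
  - intros g Hg. apply in_map_iff in Hg as [x [<- Hx]]. exists x. auto.
  - intros A M HM v Hv. rewrite eval_subst. apply Hp; [exact HM |].
    intros g Hg. rewrite <- eval_subst. apply Hv, in_map, Hg.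
Qed.

Lemma NwTheta_conseq_rules r : In r Th -> rule_holds (NwTheta_conseq Th) r.
Proof.
  intros Hr. apply NwTheta_conseq_cut with (fst r).
  - intros d Hd. now apply NwTheta_conseq_hyp.
  - intros A M HM. exact (HM r Hr).
Qed.

Lemma NeL_Theta_der_sound G p : NeL_Theta_der Th G p -> NwTheta_conseq Th G p.
Proof.
  intros Hder. apply Hder.
  - exact NwTheta_conseq_consequence_relation.
  - exact NwTheta_conseq_substitution_invariant.
  - exact NwTheta_conseq_of_NeL_der.
  - exact NwTheta_conseq_rules.
Qed.

End Soundness.

Section Quotient.
Context {T : Type} (R : T -> T -> Prop) {R_equiv : Equivalence R}.

Definition quot : Type := {P : T -> Prop | exists a, P = R a}.

Definition class (a : T) : quot := exist _ (R a) (ex_intro _ a eq_refl).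

Definition repr (X : quot) : T :=
  proj1_sig (constructive_indefinite_description _ (proj2_sig X)).

Lemma class_repr X : class (repr X) = X.
Proof.
  destruct X as [P HP]. unfold repr, class; simpl.
  destruct (constructive_indefinite_description _ HP) as [a Ha]; simpl.
  subst P. now apply subset_eq_compat.
Qed.

Lemma class_surj X : exists a, X = class a.
Proof. exists (repr X). symmetry. apply class_repr. Qed.

Lemma class_eq a b : R a b -> class a = class b.
Proof.
  intros Hab. apply subset_eq_compat.
  extensionality c. apply propositional_extensionality.
  split; intros Hc; [transitivity a; [symmetry |] | transitivity b]; assumption.
Qed.

Lemma repr_class a : R (repr (class a)) a.
Proof.
  unfold repr. destruct (constructive_indefinite_description _ _) as [b Hb]; simpl in *.
  rewrite <- Hb. reflexivity.
Qed.

End Quotient.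

Arguments repr {T R} X.
Arguments class_surj {T R} X.
Arguments class_eq {T R R_equiv a b}.
Arguments repr_class {T R R_equiv} a.

Definition deductively_closed (D : Formula -> Prop) : Prop :=
  forall p, NeL_der D p -> D p.

Definition closed_under_rules (Th : list Rule) (D : Formula -> Prop) : Prop :=
  forall r, In r Th -> forall s,
    (forall d, In d (fst r) -> D (subst s d)) -> D (subst s (snd r)).

Section Lindenbaum.
Variable D : Formula -> Prop.
Hypothesis D_closed : deductively_closed D.

Lemma D_axiom {p} : NeL_axiom p -> D p.
Proof. intros Hp. apply D_closed, d_ax, Hp. Qed.

Lemma D_mp p q : D (fimp p q) -> D p -> D q.
Proof. intros Hpq Hp. apply D_closed. apply d_mp with p; apply d_hyp; assumption. Qed.

Lemma D_adj p q : D p -> D q -> D (Ot p q).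
Proof. intros Hp Hq. apply D_closed, d_adj; apply d_hyp; assumption. Qed.

Lemma D_rep {p q c c'} : D (fiff p q) -> D c -> rep1 p q c c' -> D c'.
Proof.
  intros Hpq Hc Hrep. apply D_closed.
  apply d_rep with p q c; [apply d_hyp .. |]; assumption.
Qed.

Lemma D_simp p q : D (Ot p q) -> D p.
Proof. intros Hpq. apply D_closed. apply d_simp with q. apply d_hyp, Hpq. Qed.

Definition D_equiv (p q : Formula) : Prop := D (fiff p q).

Lemma D_equiv_mp p q : D_equiv p q -> D p -> D q.
Proof. intros Hpq Hp. exact (D_rep Hpq Hp (rep1_here p q)). Qed.

Lemma D_equiv_refl p : D_equiv p p.
Proof. apply D_adj; apply D_axiom, A1. Qed.

Lemma D_equiv_sym p q : D_equiv p q -> D_equiv q p.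
Proof. apply D_equiv_mp, D_axiom, (A5 (fimp p q) (fimp q p)). Qed.

Lemma D_equiv_trans p q r : D_equiv p q -> D_equiv q r -> D_equiv p r.
Proof.
  intros Hpq Hqr. apply (D_rep Hqr Hpq).
  exact (rep1_Ot_l (rep1_St (rep1_Ci_r (rep0_refl q r p) (rep1_St (rep1_here q r))))
                   (rep0_St (rep0_Ci (rep0_here q r) (rep0_refl q r (St p))))).
Qed.

Instance D_equiv_Equivalence : Equivalence D_equiv :=
  {| Equivalence_Reflexive := D_equiv_refl;
     Equivalence_Symmetric := D_equiv_sym;
     Equivalence_Transitive := D_equiv_trans |}.

Lemma D_equiv_rep1 {p q c c'} : D_equiv p q -> rep1 p q c c' -> D_equiv c c'.
Proof.
  intros Hpq Hrep. apply (D_rep Hpq (D_equiv_refl c)).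
  exact (rep1_Ot_l (rep1_St (rep1_Ci_r (rep0_refl p q c) (rep1_St Hrep)))
                   (rep0_St (rep0_Ci (rep1_rep0 Hrep) (rep0_refl p q (St c))))).
Qed.

Instance Ot_Proper : Proper (D_equiv ==> D_equiv ==> D_equiv) Ot.
Proof.
  intros a a' Ha b b' Hb. transitivity (Ot a' b).
  - exact (D_equiv_rep1 Ha (rep1_Ot_l (rep1_here a a') (rep0_refl a a' b))).
  - exact (D_equiv_rep1 Hb (rep1_Ot_r (rep0_refl b b' a') (rep1_here b b'))).
Qed.

Instance Ci_Proper : Proper (D_equiv ==> D_equiv ==> D_equiv) Ci.
Proof.
  intros a a' Ha b b' Hb. transitivity (Ci a' b).
  - exact (D_equiv_rep1 Ha (rep1_Ci_l (rep1_here a a') (rep0_refl a a' b))).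
  - exact (D_equiv_rep1 Hb (rep1_Ci_r (rep0_refl b b' a') (rep1_here b b'))).
Qed.

Instance St_Proper : Proper (D_equiv ==> D_equiv) St.
Proof. intros a a' Ha. exact (D_equiv_rep1 Ha (rep1_St (rep1_here a a'))). Qed.

Instance D_Proper : Proper (D_equiv ==> iff) D.
Proof. intros p q Hpq. split; apply D_equiv_mp; [| symmetry]; exact Hpq. Qed.

Lemma D_equiv_Ot_comm p q : D_equiv (Ot p q) (Ot q p).
Proof. apply D_axiom, A5. Qed.

Lemma D_equiv_Ci_comm p q : D_equiv (Ci p q) (Ci q p).
Proof. apply D_adj; apply D_axiom, A2. Qed.

Lemma D_equiv_St_St p : D_equiv p (St (St p)).
Proof.
  apply D_adj; [apply D_axiom, A3 |].
  unfold fimp. rewrite (D_equiv_Ci_comm (St (St p))). apply D_axiom, (A1 (St p)).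
Qed.

Lemma D_Ci_Ot_exchange x y z : D (fimp (Ci (Ot x y) z) (Ci (Ot x z) y)).
Proof.
  pose proof (D_axiom (A6 x z (St y))) as H. unfold fimp in H |- *.
  rewrite <- !D_equiv_St_St in H. rewrite (D_equiv_Ci_comm (St _)) in H. exact H.
Qed.

Lemma D_equiv_Ci_Ot_exchange x y z : D_equiv (Ci (Ot x y) z) (Ci (Ot x z) y).
Proof. apply D_adj; apply D_Ci_Ot_exchange. Qed.

Local Notation Q := (quot D_equiv).
Local Notation "⟦ a ⟧" := (class D_equiv a) (format "⟦ a ⟧").

Definition q_ot (X Y : Q) : Q := ⟦Ot (repr X) (repr Y)⟧.
Definition q_ci (X Y : Q) : Q := ⟦Ci (repr X) (repr Y)⟧.
Definition q_st (X : Q) : Q := ⟦St (repr X)⟧.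

Lemma q_ot_class a b : q_ot ⟦a⟧ ⟦b⟧ = ⟦Ot a b⟧.
Proof. apply class_eq. now rewrite !repr_class. Qed.

Lemma q_ci_class a b : q_ci ⟦a⟧ ⟦b⟧ = ⟦Ci a b⟧.
Proof. apply class_eq. now rewrite !repr_class. Qed.

Lemma q_st_class a : q_st ⟦a⟧ = ⟦St a⟧.
Proof. apply class_eq. now rewrite repr_class. Qed.

Lemma q_ot_comm X Y : q_ot X Y = q_ot Y X.
Proof.
  destruct (class_surj X) as [a ->], (class_surj Y) as [b ->].
  rewrite !q_ot_class. apply class_eq, D_equiv_Ot_comm.
Qed.

Lemma q_ci_comm X Y : q_ci X Y = q_ci Y X.
Proof.
  destruct (class_surj X) as [a ->], (class_surj Y) as [b ->].
  rewrite !q_ci_class. apply class_eq, D_equiv_Ci_comm.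
Qed.

Lemma q_st_invol X : q_st (q_st X) = X.
Proof.
  destruct (class_surj X) as [a ->].
  rewrite !q_st_class. apply class_eq. symmetry. apply D_equiv_St_St.
Qed.

Lemma q_ot_ci X Y Z : q_ci (q_ot X Y) Z = q_ci (q_ot X Z) Y.
Proof.
  destruct (class_surj X) as [a ->], (class_surj Y) as [b ->], (class_surj Z) as [c ->].
  rewrite !q_ot_class, !q_ci_class. apply class_eq, D_equiv_Ci_Ot_exchange.
Qed.

Definition lindenbaum_alg : weakNalg Q :=
  Build_weakNalg q_ot q_ci q_st q_ot_comm q_ci_comm q_st_invol q_ot_ci.

Lemma eval_lindenbaum s p : eval lindenbaum_alg (fun n => ⟦s n⟧) p = ⟦subst s p⟧.
Proof.
  induction p as [n | p IHp q IHq | p IHp q IHq | p IHp]; simpl.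
  - reflexivity.
  - rewrite IHp, IHq. apply q_ot_class.
  - rewrite IHp, IHq. apply q_ci_class.
  - rewrite IHp. apply q_st_class.
Qed.

Definition q_perp (x y : ext Q) : Prop :=
  match x, y with
  | El X, El Y => D (St (Ci (repr X) (repr Y)))
  | El X, tt_ => D (St (repr X))
  | El X, ff_ => D (repr X)
  | _, _ => False
  end.

Lemma q_perp_class a b : q_perp (El ⟦a⟧) (El ⟦b⟧) <-> D (St (Ci a b)).
Proof. simpl. now rewrite !repr_class. Qed.

Lemma q_perp_class_t a : q_perp (El ⟦a⟧) tt_ <-> D (St a).
Proof. simpl. now rewrite repr_class. Qed.

Lemma q_perp_class_f a : q_perp (El ⟦a⟧) ff_ <-> D a.
Proof. simpl. now rewrite repr_class. Qed.

Ltac q_simpl := repeat first [rewrite q_ot_class | rewrite q_ci_class | rewrite q_st_class].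

Lemma q_perp_a X : q_perp (El X) (El (q_st X)).
Proof.
  destruct (class_surj X) as [a ->]. q_simpl.
  apply q_perp_class, D_axiom, (A1 a).
Qed.

Lemma q_perp_b X Y : q_perp (El X) (El (q_st Y)) -> q_perp (El Y) (El (q_st X)) -> X = Y.
Proof.
  destruct (class_surj X) as [a ->], (class_surj Y) as [b ->]. q_simpl.
  rewrite !q_perp_class. intros Hab Hba. apply class_eq, D_adj; assumption.
Qed.

Lemma q_perp_c X Y : q_perp (El X) (El Y) <-> q_perp (El (q_ci X Y)) tt_.
Proof.
  destruct (class_surj X) as [a ->], (class_surj Y) as [b ->]. q_simpl.
  now rewrite q_perp_class, q_perp_class_t.
Qed.

Lemma q_perp_d X : q_perp (El X) tt_ <-> q_perp (El (q_st X)) ff_.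
Proof.
  destruct (class_surj X) as [a ->]. q_simpl.
  now rewrite q_perp_class_t, q_perp_class_f.
Qed.

Lemma q_perp_e X Y : q_perp (El X) ff_ /\ q_perp (El Y) ff_ <-> q_perp (El (q_ot X Y)) ff_.
Proof.
  destruct (class_surj X) as [a ->], (class_surj Y) as [b ->]. q_simpl.
  rewrite !q_perp_class_f. split.
  - intros [Ha Hb]. apply D_adj; assumption.
  - intros Hab. split; [exact (D_simp a b Hab) |].
    apply (D_simp b a). rewrite D_equiv_Ot_comm. exact Hab.
Qed.

Lemma q_perp_f X Y : q_perp (El (q_st (q_ci X (q_st Y)))) (El (q_st (q_ci X Y))).
Proof.
  destruct (class_surj X) as [a ->], (class_surj Y) as [b ->]. q_simpl.
  apply q_perp_class, D_axiom, (A4 a b).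
Qed.

Lemma q_perp_g X Y : q_perp (El X) (El Y) -> q_perp (El X) ff_ -> q_perp (El Y) tt_.
Proof.
  destruct (class_surj X) as [a ->], (class_surj Y) as [b ->].
  rewrite q_perp_class, q_perp_class_f, q_perp_class_t. intros Hab Ha.
  apply (D_mp a); [| exact Ha].
  unfold fimp. rewrite <- D_equiv_St_St. exact Hab.
Qed.

Lemma q_perp_h X Y Z :
  q_perp (El (aniff3 lindenbaum_alg X Y Z))
    (El (ast lindenbaum_alg (aimp lindenbaum_alg (aimp lindenbaum_alg X Y)
       (aimp lindenbaum_alg (aimp lindenbaum_alg Y Z) (aimp lindenbaum_alg X Z))))).
Proof.
  destruct (class_surj X) as [a ->], (class_surj Y) as [b ->], (class_surj Z) as [c ->].
  unfold aniff3, aniff, aiff, aimp; simpl. q_simpl.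
  apply q_perp_class, D_axiom, (A7 a b c).
Qed.

Definition lindenbaum_model : NwModel Q :=
  Build_NwModel lindenbaum_alg q_perp q_perp_a q_perp_b q_perp_c q_perp_d
    q_perp_e q_perp_f q_perp_g q_perp_h.

Lemma lindenbaum_Fperp a : Fperp lindenbaum_model ⟦a⟧ <-> D a.
Proof. exact (q_perp_class_f a). Qed.

Lemma lindenbaum_model_Theta Th : closed_under_rules Th D -> in_NwTheta Th lindenbaum_model.
Proof.
  intros HTh r Hr v Hv.
  assert (Hv_class : v = fun n => ⟦repr (v n)⟧).
  { extensionality n. symmetry. apply class_repr. }
  rewrite Hv_class in Hv |- *.
  rewrite eval_lindenbaum, lindenbaum_Fperp. apply HTh; [exact Hr |].
  intros d Hd. rewrite <- lindenbaum_Fperp, <- eval_lindenbaum. apply Hv, Hd.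
Qed.

Lemma lindenbaum_Fperp_eval p :
  Fperp lindenbaum_model (eval lindenbaum_alg (fun n => ⟦Var n⟧) p) <-> D p.
Proof. rewrite eval_lindenbaum, subst_Var. apply lindenbaum_Fperp. Qed.

End Lindenbaum.

Lemma NwTheta_conseq_in_closed_theory Th D G p :
  deductively_closed D -> closed_under_rules Th D -> (forall g, G g -> D g) ->
  NwTheta_conseq Th G p -> D p.
Proof.
  intros HD HTh HG [K [HK Hp]].
  apply (lindenbaum_Fperp_eval D HD), Hp.
  - apply lindenbaum_model_Theta, HTh.
  - intros g Hg. apply lindenbaum_Fperp_eval, HG, HK, Hg.
Qed.

Lemma consequences_deductively_closed (C : CRel) G :
  consequence_relation C -> (forall G p, NeL_der G p -> C G p) -> deductively_closed (C G).
Proof. intros [_ [_ Hcut]] HNeL p Hp. apply (Hcut G (C G)); auto. Qed.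

Lemma consequences_closed_under_rules Th (C : CRel) G :
  consequence_relation C -> substitution_invariant C ->
  (forall r, In r Th -> rule_holds C r) -> closed_under_rules Th (C G).
Proof.
  intros [_ [_ Hcut]] Hsubst HTh r Hr s Hs.
  apply (Hcut G (subst_set s (fun x => In x (fst r)))).
  - intros d [g [Hg ->]]. apply Hs, Hg.
  - apply Hsubst, HTh, Hr.
Qed.

Lemma NwTheta_conseq_complete Th G p : NwTheta_conseq Th G p -> NeL_Theta_der Th G p.
Proof.
  intros Hsem C HC Hsubst HNeL HTh.
  apply (NwTheta_conseq_in_closed_theory Th (C G) G p).
  - now apply consequences_deductively_closed.
  - now apply consequences_closed_under_rules.
  - exact (proj1 HC G).
  - exact Hsem.
Qed.

Theorem theorem4p7 (Th : list Rule) (G : Formula -> Prop) (p : Formula) :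
  NeL_Theta_der Th G p <-> NwTheta_conseq Th G p.
Proof.
  split.
  - apply NeL_Theta_der_sound.
  - apply NwTheta_conseq_complete.
Qed.
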